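(* Let $\mathbb K$ be a field with $2\in\mathbb K^\times$, $A$ a unital commutative associative $\mathbb K$-algebra with unit $\mathbf 1$, $\mathfrak k$ a $\mathbb K$-Lie algebra, $\mathfrak g=A\otimes\mathfrak k$, and $\mathfrak z$ a $\mathbb K$-vector space. Let $f_1:\Lambda^2(A)\otimes S^2(\mathfrak k)\to\mathfrak z$, $f_2:A\otimes\Lambda^2(\mathfrak k)\to\mathfrak z$, $f_3:I_A\otimes\Lambda^2(\mathfrak k)\to\mathfrak z$ be linear. Then $f=f_1\circ p_1+f_2\circ p_2+f_3\circ p_3:\Lambda^2(\mathfrak g)\to\mathfrak z$ is a 2-cocycle if and only if: (a) $\tilde f_1(a,b)$ is an invariant symmetric bilinear map for all $a,b\in A$; (b) for every $t\in T_0(A)$, $\tilde f_1(t)(x,y)=0$ for all $x\in\mathfrak k$, $y\in\mathfrak k'$; (c) $d_{\mathfrak k}(\tilde f_2(a))=\Gamma(\tilde f_1(a,\mathbf 1))$ for every $a\in A$; (d) for every $c\in I_A$, $\tilde f_3(c)(x,y)=0$ for all $x\in\mathfrak k$, $y\in\mathfrak k'$.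
   Context: $\mathfrak g$ has bracket $[a\otimes x,a'\otimes x']=aa'\otimes[x,x']$; write $ax=a\otimes x$; $\mathfrak k'=[\mathfrak k,\mathfrak k]$. $\Lambda^2(V)$, $S^2(V)$ are identified with antisymmetric/symmetric tensors via $v\wedge w=\tfrac12(v\otimes w-w\otimes v)$, $v\vee w=\tfrac12(v\otimes w+w\otimes v)$. $I_A\subseteq S^2(A)$ is the kernel of the multiplication map $S^2(A)\to A$. The linear maps $p_1(ax\wedge by)=a\wedge b\otimes x\vee y\in\Lambda^2(A)\otimes S^2(\mathfrak k)$, $p_2(ax\wedge by)=ab\otimes x\wedge y\in A\otimes\Lambda^2(\mathfrak k)$, $p_3(ax\wedge by)=(a\vee b-ab\vee\mathbf 1)\otimes x\wedge y\in I_A\otimes\Lambda^2(\mathfrak k)$ together give a linear isomorphism of $\Lambda^2(\mathfrak g)$ onto the direct sum of the three spaces. A 2-cocycle is a linear map $f:\Lambda^2(\mathfrak g)\to\mathfrak z$ vanishing on $B_2(\mathfrak g)=\mathrm{im}\,\partial$, where $\partial(u\wedge v\wedge w)=[u,v]\wedge w+[v,w]\wedge u+[w,u]\wedge v$. Set $\tilde f_1(a,b)(x,y):=f_1(a\wedge b\otimes x\vee y)$ (extended linearly to $\Lambda^2(A)$), $\tilde f_2(a)(x,y):=f_2(a\otimes x\wedge y)$, $\tilde f_3(c)(x,y):=f_3(c\otimes x\wedge y)$. A symmetric bilinear $\kappa:\mathfrak k\times\mathfrak k\to\mathfrak z$ is invariant if $\kappa([x,y],z)=\kappa(x,[y,z])$;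 for such $\kappa$, $\Gamma(\kappa)(x,y,z):=\kappa([x,y],z)$. $T_0(A)\subseteq\Lambda^2(A)$ is the span of $ab\wedge c+bc\wedge a+ca\wedge b-abc\wedge\mathbf 1$, $a,b,c\in A$. For alternating bilinear $\eta:\mathfrak k\times\mathfrak k\to\mathfrak z$, $(d_{\mathfrak k}\eta)(x,y,z)=-\eta([x,y],z)+\eta([x,z],y)-\eta([y,z],x)$. *)

From HB Require Import structures.
From mathcomp Require Import all_boot all_order all_algebra.
Set Implicit Arguments. Unset Strict Implicit. Unset Printing Implicit Defensive.
Import GRing.Theory.
Local Open Scope ring_scope.

Section Defs.
Variables (K : fieldType).

Definition lie_bracket (k : lmodType K) (br : k -> k -> k) : Prop :=
  [/\ forall (c : K) (x x' y : k), br (c *: x + x') y = c *: br x y + br x' y,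
      forall (c : K) (x y y' : k), br x (c *: y + y') = c *: br x y + br x y',
      forall x : k, br x x = 0
    & forall x y w : k, br x (br y w) + br y (br w x) + br w (br x y) = 0].

Definition in_derived (k : lmodType K) (br : k -> k -> k) (y : k) : Prop :=
  exists n (l : 'I_n -> K) (u v : 'I_n -> k), y = \sum_(i < n) l i *: br (u i) (v i).

Definition bilinear_map (k z : lmodType K) (b : k -> k -> z) : Prop :=
  (forall (c : K) x x' y, b (c *: x + x') y = c *: b x y + b x' y) /\
  (forall (c : K) x y y', b x (c *: y + y') = c *: b x y + b x y').

Definition inv_sym_bilinear (k z : lmodType K) (br : k -> k -> k)
    (kappa : k -> k -> z) : Prop :=
  [/\ bilinear_map kappa,
      forall x y, kappa x y = kappa y x
    & forall x y w, kappa (br x y) w = kappa x (br y w)].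

Definition Gamma (k z : lmodType K) (br : k -> k -> k) (kappa : k -> k -> z) :
  k -> k -> k -> z := fun x y w => kappa (br x y) w.

Definition dk (k z : lmodType K) (br : k -> k -> k) (eta : k -> k -> z) :
  k -> k -> k -> z :=
  fun x y w => - eta (br x y) w + eta (br x w) y - eta (br y w) x.

Definition multilinear4 (V1 V2 V3 V4 z : lmodType K) (F : V1 -> V2 -> V3 -> V4 -> z) :
  Prop :=
  [/\ forall (c : K) a a' b x y, F (c *: a + a') b x y = c *: F a b x y + F a' b x y,
      forall (c : K) a b b' x y, F a (c *: b + b') x y = c *: F a b x y + F a b' x y,
      forall (c : K) a b x x' y, F a b (c *: x + x') y = c *: F a b x y + F a b x' y
    & forall (c : K) a b x y y', F a b x (c *: y + y') = c *: F a b x y + F a b x y'].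

Definition multilinear3 (V1 V2 V3 z : lmodType K) (F : V1 -> V2 -> V3 -> z) : Prop :=
  [/\ forall (c : K) a a' x y, F (c *: a + a') x y = c *: F a x y + F a' x y,
      forall (c : K) a x x' y, F a (c *: x + x') y = c *: F a x y + F a x' y
    & forall (c : K) a x y y', F a x (c *: y + y') = c *: F a x y + F a x y'].

Variables (A : comAlgType K) (k z : lmodType K) (br : k -> k -> k).

(* Encodings (by the universal properties) of the linear maps
   f1 : Lambda^2(A) (x) S^2(k) -> z   as F1 a b x y = f1(a/\b (x) x\/y),
   f2 : A (x) Lambda^2(k) -> z        as F2 a x y   = f2(a (x) x/\y),
   f3 : S^2(A) (x) Lambda^2(k) -> z   as F3 a b x y = f3(a\/b (x) x/\y). *)
Definition f1_map (F1 : A -> A -> k -> k -> z) : Prop :=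
  [/\ multilinear4 F1, forall a x y, F1 a a x y = 0
    & forall a b x y, F1 a b x y = F1 a b y x].

Definition f2_map (F2 : A -> k -> k -> z) : Prop :=
  multilinear3 F2 /\ forall a x, F2 a x x = 0.

Definition f3_map (F3 : A -> A -> k -> k -> z) : Prop :=
  [/\ multilinear4 F3, forall a b x y, F3 a b x y = F3 b a x y
    & forall a b x, F3 a b x x = 0].

(* f = f1 o p1 + f2 o p2 + f3 o p3, evaluated on the generator ax /\ by of Lambda^2(g). *)
Definition f_of (F1 : A -> A -> k -> k -> z) (F2 : A -> k -> k -> z)
    (F3 : A -> A -> k -> k -> z) (a : A) (x : k) (b : A) (y : k) : z :=
  F1 a b x y + F2 (a * b) x y + (F3 a b x y - F3 (a * b) 1 x y).

(* f vanishes on B_2(g) = im d, where Lambda^3(g) is spanned by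
   ax /\ by /\ cw and [ax,by] = ab[x,y]. *)
Definition is_2cocycle (f : A -> k -> A -> k -> z) : Prop :=
  forall (a b c : A) (x y w : k),
    f (a * b) (br x y) c w + f (b * c) (br y w) a x + f (c * a) (br w x) b y = 0.

End Defs.

(* Evaluate f on the boundary of ax /\ by /\ cw.  Comparing the resulting
   cocycle sums at (a,1,c) and (c,1,a) leaves 2 (f1(a,c)([x,y],w) - f1(a,c)([y,w],x)),
   so invertibility of 2 forces invariance of every f1(a,c), i.e. (a).  Once f1 is
   invariant, the cocycle sum at (a,b,c) splits as
     f1(t_abc)([x,y],w) + (Gamma(f1(abc,1)) - d_k f2(abc))(x,y,w) + (cyclic f3 o p3 terms),
   t_abc = ab/\c + bc/\a + ca/\b - abc/\1 being the generator of T_0(A).  At (a,1,1)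
   only the middle term survives, which is (c).  At (a,1,c) what remains is
   g(x,y,w) + g(y,w,x) for g = f3(a\/c - ac\/1)([.,.],.); as 2 is invertible, a
   function anti-invariant under a rotation of order 3 vanishes, and this is (d)
   because the a\/c - ac\/1 span I_A.  The general (a,b,c) then gives (b).
   Conversely (a)-(d) kill the three terms one by one. *)

From HB Require Import structures.
From mathcomp Require Import all_boot all_order all_algebra.
From mathcomp Require Import ring.
From Stdlib Require Import FunctionalExtensionality.
Set Implicit Arguments. Unset Strict Implicit. Unset Printing Implicit Defensive.
Import GRing.Theory.
Local Open Scope ring_scope.

Section LinearFacts.
Variable K : fieldType.

Definition as_linear (U V : lmodType K) (f : U -> V) (f_lin : linear f) : {linear U -> V} :=
  HB.pack f (GRing.isLinear.Build K U V *:%R f f_lin).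

Lemma linear_lincomb (U V : lmodType K) (f : U -> V) (f_lin : linear f) n
    (l : 'I_n -> K) (u : 'I_n -> U) :
  f (\sum_(i < n) l i *: u i) = \sum_(i < n) l i *: f (u i).
Proof.
have -> : f (\sum_(i < n) l i *: u i) = \sum_(i < n) f (l i *: u i).
  exact: (linear_sum (as_linear f_lin)).
by apply: eq_bigr => i _; rewrite (scalable_linear f_lin).
Qed.

Lemma in_derived_bracket (k : lmodType K) (br : k -> k -> k) u v : in_derived br (br u v).
Proof. by exists 1%N, (fun=> 1), (fun=> u), (fun=> v); rewrite big_ord1 scale1r. Qed.

Lemma linear_in_derived_eq0 (k z : lmodType K) (br : k -> k -> k) (g : k -> z) :
  linear g -> (forall u v, g (br u v) = 0) -> forall y, in_derived br y -> g y = 0.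
Proof.
move=> g_lin g_br0 _ [n [l [u [v ->]]]]; rewrite (linear_lincomb g_lin).
by apply: big1 => i _; rewrite g_br0 scaler0.
Qed.

Lemma skew_of_alternating (U V : lmodType K) (B : U -> U -> V) :
  (forall y, linear (B^~ y)) -> (forall x, linear (B x)) -> (forall x, B x x = 0) ->
  forall x y, B y x = - B x y.
Proof.
move=> linl linr Bxx x y; apply/eqP; rewrite -addr_eq0 addrC.
have BDl u v w : B (u + v) w = B u w + B v w := linearD (as_linear (linl w)) u v.
have BDr u v w : B w (u + v) = B w u + B w v := linearD (as_linear (linr w)) u v.
by have := Bxx (x + y); rewrite BDl !BDr !Bxx add0r addr0 => ->.
Qed.

Lemma eq_opp_self (V : lmodType K) : (2 : K) != 0 -> forall v : V, v = - v -> v = 0.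
Proof.
move=> two_unit v /eqP; rewrite -addr_eq0 -mulr2n -scaler_nat scaler_eq0.
by rewrite (negPf two_unit) => /eqP.
Qed.

Lemma antiinvariant_rotation_eq0 (V : lmodType K) (T : Type) (g : T -> T -> T -> V) :
  (2 : K) != 0 -> (forall x y w, g x y w + g y w x = 0) -> forall x y w, g x y w = 0.
Proof.
move=> two_unit g_rot x y w; apply: eq_opp_self => //.
have g_anti x' y' w' : g x' y' w' = - g y' w' x' by apply/eqP; rewrite -addr_eq0 g_rot.
by rewrite [LHS]g_anti g_anti opprK g_anti.
Qed.

End LinearFacts.

Section Cocycle.
Variables (K : fieldType) (A : comAlgType K) (k z : lmodType K) (br : k -> k -> k).
Variables (F1 : A -> A -> k -> k -> z) (F2 : A -> k -> k -> z) (F3 : A -> A -> k -> k -> z).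
Hypotheses (two_unit : (2 : K) != 0) (Hlie : lie_bracket br).
Hypotheses (HF1 : f1_map F1) (HF2 : f2_map F2) (HF3 : f3_map F3).

Lemma br_skew x y : br y x = - br x y.
Proof.
case: Hlie => brl brr brxx _.
by apply: skew_of_alternating => // [w c u v | w c u v]; [exact: brl | exact: brr].
Qed.

Lemma F1_linear3 a b y : linear (F1 a b ^~ y).
Proof. by case: HF1 => -[_ _ F1l _] _ _ c u v; exact: F1l. Qed.

Lemma F1_linear4 a b x : linear (F1 a b x).
Proof. by case: HF1 => -[_ _ _ F1l] _ _ c u v; exact: F1l. Qed.

Lemma F1_sym a b x y : F1 a b x y = F1 a b y x.
Proof. by case: HF1. Qed.

Lemma F1_skewA a b x y : F1 b a x y = - F1 a b x y.
Proof.
case: HF1 => -[F1l1 F1l2 _ _] F1aa _.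
by apply: (@skew_of_alternating _ _ _ (fun a b => F1 a b x y)) => // [w c u v | w c u v];
  [exact: F1l1 | exact: F1l2].
Qed.

Lemma F2_linear2 a y : linear (F2 a ^~ y).
Proof. by case: HF2 => -[_ F2l _] _ c u v; exact: F2l. Qed.

Lemma F3_linear1 b x y : linear (fun a => F3 a b x y).
Proof. by case: HF3 => -[F3l _ _ _] _ _ c u v; exact: F3l. Qed.

Lemma F3_linear4 a b x : linear (F3 a b x).
Proof. by case: HF3 => -[_ _ _ F3l] _ _ c u v; exact: F3l. Qed.

Lemma F3_symA a b x y : F3 b a x y = F3 a b x y.
Proof. by case: HF3. Qed.

Lemma F3_skew a b x y : F3 a b y x = - F3 a b x y.
Proof.
case: HF3 => -[_ _ F3l3 F3l4] _ F3xx.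
by apply: skew_of_alternating => // [w c u v | w c u v]; [exact: F3l3 | exact: F3l4].
Qed.

Definition F1_invariant : Prop :=
  forall p q x y w, F1 p q (br x y) w = F1 p q (br y w) x.

(* [f1_T0 a b c] is f1 on the T_0(A)-generator t_abc, and [f3_p3 p q x y] is
   f3((p\/q - pq\/1) (x) x/\y) = (f3 o p3)(px /\ qy). *)
Definition f1_T0 (a b c : A) (x y : k) : z :=
  F1 (a * b) c x y + F1 (b * c) a x y + F1 (c * a) b x y - F1 (a * b * c) 1 x y.

Definition f3_p3 (p q : A) (x y : k) : z := F3 p q x y - F3 (p * q) 1 x y.

Definition Gamma_minus_dk (a : A) (x y w : k) : z :=
  Gamma br (F1 a 1) x y w - dk br (F2 a) x y w.

Definition cocycle_sum (a b c : A) (x y w : k) : z :=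
  f_of F1 F2 F3 (a * b) (br x y) c w + f_of F1 F2 F3 (b * c) (br y w) a x
  + f_of F1 F2 F3 (c * a) (br w x) b y.

Definition F1_cyc (a b c : A) (x y w : k) : z :=
  F1 (a * b) c (br x y) w + F1 (b * c) a (br y w) x + F1 (c * a) b (br w x) y.

Definition f3_p3_cyc (a b c : A) (x y w : k) : z :=
  f3_p3 (a * b) c (br x y) w + f3_p3 (b * c) a (br y w) x + f3_p3 (c * a) b (br w x) y.

Lemma f3_p3C p q x y : f3_p3 q p x y = f3_p3 p q x y.
Proof. by rewrite /f3_p3 F3_symA mulrC. Qed.

Lemma f3_p3r1 p x y : f3_p3 p 1 x y = 0.
Proof. by rewrite /f3_p3 mulr1 subrr. Qed.

Lemma f3_p3_skew p q x y : f3_p3 p q y x = - f3_p3 p q x y.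
Proof. by rewrite /f3_p3 (F3_skew p q) (F3_skew (p * q)) opprD. Qed.

Lemma f3_p3_linear p q x : linear (f3_p3 p q x).
Proof.
exact: GRing.linearP (as_linear (F3_linear4 p q x) \- as_linear (F3_linear4 (p * q) 1 x)).
Qed.

Lemma f1_T0_sym a b c x y : f1_T0 a b c x y = f1_T0 a b c y x.
Proof. by rewrite /f1_T0 !(F1_sym _ _ x). Qed.

Lemma f1_T0_linear a b c x : linear (f1_T0 a b c x).
Proof.
exact: GRing.linearP (as_linear (F1_linear4 (a * b) c x) \+ as_linear (F1_linear4 (b * c) a x)
  \+ as_linear (F1_linear4 (c * a) b x) \- as_linear (F1_linear4 (a * b * c) 1 x)).
Qed.

Lemma f1_T0_1 a c x y : f1_T0 a 1 c x y = 0.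
Proof. by rewrite /f1_T0 !mulr1 mul1r [c * a]mulrC (F1_skewA a c) addrN add0r subrr. Qed.

Lemma Gamma_minus_dkE a x y w :
  Gamma_minus_dk a x y w
  = F1 a 1 (br x y) w + (F2 a (br x y) w + F2 a (br y w) x + F2 a (br w x) y).
Proof.
rewrite /Gamma_minus_dk /Gamma /dk (br_skew w x).
have -> : F2 a (- br w x) y = - F2 a (br w x) y := linearN (as_linear (F2_linear2 a y)) _.
by rewrite !opprD !opprK addrAC.
Qed.

Lemma cocycle_sumE a b c x y w :
  cocycle_sum a b c x y w = F1_cyc a b c x y w
    + (F2 (a * b * c) (br x y) w + F2 (a * b * c) (br y w) x + F2 (a * b * c) (br w x) y)
    + f3_p3_cyc a b c x y w.
Proof.
rewrite /cocycle_sum /F1_cyc /f3_p3_cyc /f_of -!/(f3_p3 _ _ _ _).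
have -> : b * c * a = a * b * c by ring.
have -> : c * a * b = a * b * c by ring.
by rewrite (AC (3 * 3 * 3) ((1 * 4 * 7) * (2 * 5 * 8) * (3 * 6 * 9))).
Qed.

Lemma f3_p3_cyc_1 a c x y w :
  f3_p3_cyc a 1 c x y w = f3_p3 a c (br x y) w + f3_p3 a c (br y w) x.
Proof. by rewrite /f3_p3_cyc mulr1 mul1r f3_p3r1 addr0 (f3_p3C a c). Qed.

Lemma cocycle_F1_invariant :
  (forall a b c x y w, cocycle_sum a b c x y w = 0) -> F1_invariant.
Proof.
move=> coc a c x y w.
have h1 := coc a 1 c x y w; have h2 := coc c 1 a x y w.
rewrite cocycle_sumE f3_p3_cyc_1 in h1; rewrite cocycle_sumE f3_p3_cyc_1 in h2.
rewrite !mulr1 in h1 h2; rewrite [c * a]mulrC !(f3_p3C a c) -h1 in h2.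
move: h2 => /addIr /addIr; rewrite /F1_cyc !mulr1 !mul1r [c * a]mulrC !(F1_skewA a c).
move=> /addIr F1_rot; apply/eqP; rewrite -subr_eq0; apply/eqP.
by apply: eq_opp_self => //; rewrite opprB -F1_rot addrC.
Qed.

Section Invariant.
Hypothesis F1_inv : F1_invariant.

Lemma F1_cyc_invariant a b c x y w :
  F1_cyc a b c x y w = f1_T0 a b c (br x y) w + F1 (a * b * c) 1 (br x y) w.
Proof. by rewrite /F1_cyc /f1_T0 subrK -(F1_inv (b * c) a x y w) (F1_inv (c * a) b w x y). Qed.

Lemma cocycle_sum_invariantE a b c x y w :
  cocycle_sum a b c x y w
  = f1_T0 a b c (br x y) w + Gamma_minus_dk (a * b * c) x y w + f3_p3_cyc a b c x y w.
Proof. by rewrite cocycle_sumE F1_cyc_invariant Gamma_minus_dkE; congr (_ + _); rewrite -addrA. Qed.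

End Invariant.

Section CocycleConsequences.
Hypothesis coc : forall a b c x y w, cocycle_sum a b c x y w = 0.

Let F1_inv : F1_invariant := cocycle_F1_invariant coc.

Lemma cocycle_Gamma_minus_dk_eq0 a x y w : Gamma_minus_dk a x y w = 0.
Proof.
have := coc a 1 1 x y w.
by rewrite (cocycle_sum_invariantE F1_inv) f1_T0_1 f3_p3_cyc_1 !f3_p3r1 !mulr1 add0r !addr0.
Qed.

Lemma cocycle_f3_p3_eq0 p q u v w : f3_p3 p q (br u v) w = 0.
Proof.
apply: (antiinvariant_rotation_eq0 (g := fun u v w => f3_p3 p q (br u v) w)) => // x y w'.
have := coc p 1 q x y w'.
by rewrite (cocycle_sum_invariantE F1_inv) f1_T0_1 cocycle_Gamma_minus_dk_eq0 f3_p3_cyc_1 !add0r.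
Qed.

Lemma cocycle_f1_T0_eq0 a b c u v w : f1_T0 a b c (br u v) w = 0.
Proof.
have := coc a b c u v w.
by rewrite (cocycle_sum_invariantE F1_inv) cocycle_Gamma_minus_dk_eq0 /f3_p3_cyc !cocycle_f3_p3_eq0 !addr0.
Qed.

End CocycleConsequences.

Lemma cocycle_iff :
  is_2cocycle br (f_of F1 F2 F3) <->
  [/\ F1_invariant, forall a b c u v w, f1_T0 a b c (br u v) w = 0,
      forall a x y w, Gamma_minus_dk a x y w = 0
    & forall p q u v w, f3_p3 p q (br u v) w = 0].
Proof.
split=> [coc | [F1_inv T0 Gdk p3] a b c x y w].
  split; [exact: cocycle_F1_invariant | exact: cocycle_f1_T0_eq0
         | exact: cocycle_Gamma_minus_dk_eq0 | exact: cocycle_f3_p3_eq0].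
change (cocycle_sum a b c x y w = 0).
by rewrite (cocycle_sum_invariantE F1_inv) T0 Gdk /f3_p3_cyc !p3 !addr0.
Qed.

Lemma inv_sym_bilinear_iff :
  (forall a b, inv_sym_bilinear br (F1 a b)) <-> F1_invariant.
Proof.
split=> [F1_isb p q x y w | F1_inv a b].
  by case: (F1_isb p q) => _ sym inv; rewrite inv sym.
split=> [|x y | x y w]; last by rewrite F1_inv F1_sym.
  by split=> [c u u' v | c u v v']; [exact: F1_linear3 | exact: F1_linear4].
exact: F1_sym.
Qed.

Lemma T0_condition_iff :
  (forall (n : nat) (l : 'I_n -> K) (a b c : 'I_n -> A) (x y : k),
      in_derived br y -> \sum_(i < n) l i *: f1_T0 (a i) (b i) (c i) x y = 0)
  <-> forall a b c u v w, f1_T0 a b c (br u v) w = 0.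
Proof.
split=> [T0 a b c u v w | T0 n l a b c x y y_der].
  have := T0 1%N (fun=> 1) (fun=> a) (fun=> b) (fun=> c) w _ (in_derived_bracket br u v).
  by rewrite big_ord1 scale1r f1_T0_sym.
apply: big1 => i _.
have -> : f1_T0 (a i) (b i) (c i) x y = 0.
  apply: (linear_in_derived_eq0 _ _ y_der) => [|u v]; first exact: f1_T0_linear.
  by rewrite f1_T0_sym T0.
by rewrite scaler0.
Qed.

Lemma dk_condition_iff :
  (forall a, dk br (F2 a) = Gamma br (F1 a 1)) <-> forall a x y w, Gamma_minus_dk a x y w = 0.
Proof.
split=> [dkE a x y w | Gdk a]; first by rewrite /Gamma_minus_dk dkE subrr.
apply: functional_extensionality => x; apply: functional_extensionality => y.
apply: functional_extensionality => w.
by apply/eqP; rewrite eq_sym -subr_eq0; apply/eqP; exact: Gdk.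
Qed.

Lemma IA_condition_iff :
  (forall (n : nat) (l : 'I_n -> K) (a b : 'I_n -> A) (x y : k),
      \sum_(i < n) l i *: (a i * b i) = 0 -> in_derived br y ->
      \sum_(i < n) l i *: F3 (a i) (b i) x y = 0)
  <-> forall p q u v w, f3_p3 p q (br u v) w = 0.
Proof.
split=> [IA p q u v w | p3 n l a b x y lab0 y_der].
  (* the element p\/q - pq\/1 of I_A *)
  pose l2 (i : 'I_2) : K := if i == ord0 then 1 else -1.
  pose a2 (i : 'I_2) : A := if i == ord0 then p else p * q.
  pose b2 (i : 'I_2) : A := if i == ord0 then q else 1.
  have := IA 2 l2 a2 b2 w (br u v).
  rewrite !big_ord_recl !big_ord0 /l2 /a2 /b2 /= !addr0 !scale1r !scaleN1r mulr1 subrr.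
  move=> /(_ erefl (in_derived_bracket br u v)).
  change (f3_p3 p q w (br u v) = 0 -> f3_p3 p q (br u v) w = 0).
  by rewrite f3_p3_skew => /eqP; rewrite oppr_eq0 => /eqP.
have F3_ab i : F3 (a i) (b i) x y = F3 (a i * b i) 1 x y.
  apply/eqP; rewrite -subr_eq0; apply/eqP.
  apply: (linear_in_derived_eq0 (g := f3_p3 (a i) (b i) x) _ _ y_der) => [|u v].
    exact: f3_p3_linear.
  by rewrite f3_p3_skew p3 oppr0.
under eq_bigr do rewrite F3_ab.
have := linear_lincomb (F3_linear1 1 x y) l (fun i => a i * b i).
rewrite /= => <-; rewrite lab0.
exact: (linear0 (as_linear (F3_linear1 1 x y))).
Qed.

End Cocycle.

Theorem theorem3p1 (K : fieldType) (two_unit : (2 : K) != 0)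
    (A : comAlgType K) (k z : lmodType K) (br : k -> k -> k)
    (Hlie : lie_bracket br)
    (F1 : A -> A -> k -> k -> z) (F2 : A -> k -> k -> z) (F3 : A -> A -> k -> k -> z)
    (HF1 : f1_map F1) (HF2 : f2_map F2) (HF3 : f3_map F3) :
  is_2cocycle br (f_of F1 F2 F3) <->
  [/\ (* (a) *)
      forall a b : A, inv_sym_bilinear br (F1 a b),
      (* (b): for t = sum_i l_i (a_i b_i /\ c_i + b_i c_i /\ a_i + c_i a_i /\ b_i
                                - a_i b_i c_i /\ 1) in T_0(A) *)
      forall (n : nat) (l : 'I_n -> K) (a b c : 'I_n -> A) (x y : k),
        in_derived br y ->
        \sum_(i < n) l i *: (F1 (a i * b i) (c i) x y + F1 (b i * c i) (a i) x y
                             + F1 (c i * a i) (b i) x y - F1 (a i * b i * c i) 1 x y) = 0,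
      (* (c) *)
      forall a : A, dk br (F2 a) = Gamma br (F1 a 1)
    & (* (d): for c = sum_i l_i (a_i \/ b_i) with sum_i l_i a_i b_i = 0, i.e. c in I_A *)
      forall (n : nat) (l : 'I_n -> K) (a b : 'I_n -> A) (x y : k),
        \sum_(i < n) l i *: (a i * b i) = 0 ->
        in_derived br y ->
        \sum_(i < n) l i *: F3 (a i) (b i) x y = 0].
Proof.
have coc_iff := cocycle_iff two_unit Hlie HF1 HF2 HF3.
have a_iff := inv_sym_bilinear_iff br HF1.
have b_iff := T0_condition_iff br HF1.
have c_iff := dk_condition_iff br F1 F2.
have d_iff := IA_condition_iff br HF3.
split=> [/coc_iff[F1_inv T0 Gdk p3] | [/a_iff F1_inv /b_iff T0 /c_iff Gdk /d_iff p3]].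
  by split; [apply/a_iff | apply/b_iff | apply/c_iff | apply/d_iff].
exact/coc_iff.
Qed.
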